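(* Let $\mathbb{H}$ be a reproducing kernel Hilbert space with inner product $\langle\cdot,\cdot\rangle$ and feature map $\phi$, let $\Sigma:=\operatorname{Var}\phi(X)$, and let $(X,A,Y)$ be jointly distributed with $Y=\langle\phi(X),y\rangle$ and $A=\langle\phi(X),a\rangle$ for some nonzero $y,a\in\mathbb{H}$, with $\operatorname{Var}(Y),\operatorname{Var}(A)>0$; let $\rho_{YA}$ be the correlation coefficient of $Y$ and $A$. Suppose $(X,\phi)$ is regular. Then: (i) there exists a (possibly randomized) representation $Z=g(X)$ with $\operatorname{Var}\mathbb{E}[A\mid Z]=0$ and $\operatorname{Var}\mathbb{E}[Y\mid Z]=\operatorname{Var}(Y)(1-\rho_{YA}^2)$; (ii) there exists a (possibly randomized) representation $Z=g(X)$ with $\operatorname{Var}\mathbb{E}[Y\mid Z]=\operatorname{Var}(Y)$ and $\operatorname{Var}\mathbb{E}[A\mid Z]=\operatorname{Var}(A)\rho_{YA}^2$; (iii) for every $\lambda\ge0$ there exists a (possibly randomized) representation $Z=g(X)$ with $$\lambda\operatorname{Var}\mathbb{E}[A\mid Z]-\operatorname{Var}\mathbb{E}[Y\mid Z]=\frac12\Big\{\lambda\operatorname{Var}(A)-\operatorname{Var}(Y)-\sqrt{\operatorname{Var}^2(Y)+\lambda^2\operatorname{Var}^2(A)-2\lambda\operatorname{Var}(A)\operatorname{Var}(Y)(2\rho_{YA}^2-1)}\Big\}.$$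
   Context: A (possibly randomized) representation is $Z=g(X,S)$ with auxiliary randomness $S$ independent of $(X,A,Y)$. $(X,\phi)$ is called regular if for every positive semidefinite operator $M$ with $0\preceq M\preceq\Sigma$ there exists a (possibly randomized) representation $Z=g(X)$ such that $\operatorname{Var}\mathbb{E}[\phi(X)\mid Z]=M$ (the covariance operator of $\mathbb{E}[\phi(X)\mid Z]$). *)

From HB Require Import structures.
From mathcomp Require Import all_boot all_order all_algebra.
From mathcomp Require Import all_classical all_reals all_analysis.

Set Implicit Arguments.
Unset Strict Implicit.
Unset Printing Implicit Defensive.

Import Order.TTheory GRing.Theory Num.Theory.
Local Open Scope classical_set_scope.
Local Open Scope ring_scope.

Section hilbert.
Context {R : realType} {H : lmodType R}.

Definition inner_product (ip : H -> H -> R) : Prop :=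
  [/\ (forall u v, ip u v = ip v u),
      (forall (c : R) u v w, ip (c *: u + v) w = c * ip u w + ip v w),
      (forall u, 0 <= ip u u)
    & (forall u, ip u u = 0 -> u = 0)].

Definition ipnorm (ip : H -> H -> R) (u : H) : R := Num.sqrt (ip u u).

Definition ip_complete (ip : H -> H -> R) : Prop :=
  forall u : nat -> H,
    (forall e : R, 0 < e -> exists N : nat, forall m n : nat,
        (N <= m)%N -> (N <= n)%N -> ipnorm ip (u m - u n) < e) ->
    exists l : H, forall e : R, 0 < e -> exists N : nat, forall n : nat,
        (N <= n)%N -> ipnorm ip (u n - l) < e.

Definition hilbert_space (ip : H -> H -> R) : Prop :=
  inner_product ip /\ ip_complete ip.

(* (H, ip) is a reproducing kernel Hilbert space of real functions on
   the set Xt: ev identifies H (linearly, injectively) with a space of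
   functions Xt -> R, and phi x is the representer of evaluation at x
   (the feature map, phi x = k(x, .)). *)
Definition RKHS {Xt : Type} (ip : H -> H -> R) (ev : H -> Xt -> R)
    (phi : Xt -> H) : Prop :=
  [/\ hilbert_space ip,
      (forall (c : R) f g x, ev (c *: f + g) x = c * ev f x + ev g x),
      injective ev
    & (forall f x, ev f x = ip f (phi x))].

End hilbert.

Section prob.
Context {R : realType} {dO : measure_display} {Om : measurableType dO}
  (P : probability Om R).

Definition indep_rv {d1 d2 : measure_display} {T1 : measurableType d1}
    {T2 : measurableType d2} (X : Om -> T1) (S : Om -> T2) : Prop :=
  forall (A : set T1) (B : set T2), measurable A -> measurable B ->
    P (X @^-1` A `&` S @^-1` B) = (P (X @^-1` A) * P (S @^-1` B))%E.

(* Z is a (possibly randomized) representation of X: Z = g(X, S) with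
   auxiliary randomness S independent of X (hence of (X, A, Y), A and Y
   being functions of X). *)
Definition representation {dX : measure_display} {TX : measurableType dX}
    (X : Om -> TX) {dZ : measure_display} {TZ : measurableType dZ}
    (Z : Om -> TZ) : Prop :=
  exists (dS : measure_display) (TS : measurableType dS) (S : Om -> TS)
         (g : TX * TS -> TZ),
    [/\ measurable_fun setT S, measurable_fun setT g, indep_rv X S
      & Z = g \o (fun w => (X w, S w))].

Definition cond_exp {dZ : measure_display} {TZ : measurableType dZ}
    (Z : Om -> TZ) (W : Om -> R) (h : TZ -> R) : Prop :=
  [/\ measurable_fun setT h,
      P.-integrable setT (fun w => (h (Z w))%:E)
    & forall B : set TZ, measurable B ->
        (\int[P]_(w in Z @^-1` B) (W w)%:E =
         \int[P]_(w in Z @^-1` B) (h (Z w))%:E)%E].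

Definition condvar_is {dZ : measure_display} {TZ : measurableType dZ}
    (Z : Om -> TZ) (W : Om -> R) (v : R) : Prop :=
  exists h : TZ -> R, cond_exp Z W h /\ 'V_P[h \o Z] = v%:E.

(* Var E[phi(X) | Z] = M (covariance operator of E[phi(X)|Z]), stated
   through the scalar projections: for all u v,
   <u, M v> = Cov(E[<phi(X),u> | Z], E[<phi(X),v> | Z]). *)
Definition condcov_is {H : lmodType R} (ip : H -> H -> R)
    {dZ : measure_display} {TZ : measurableType dZ}
    (Z : Om -> TZ) (Phi : H -> Om -> R) (M : H -> H) : Prop :=
  exists h : H -> TZ -> R,
    (forall u, cond_exp Z (Phi u) (h u)) /\
    (forall u v, covariance P (h u \o Z) (h v \o Z) = (ip u (M v))%:E).

Definition regular {H : lmodType R} (ip : H -> H -> R)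
    {dX : measure_display} {TX : measurableType dX}
    (X : Om -> TX) (phi : TX -> H) : Prop :=
  forall M : {linear H -> H},
    (forall u v, ip u (M v) = ip (M u) v) ->
    (forall u, 0 <= ip u (M u)) ->
    (forall u, ((ip u (M u))%:E <= 'V_P[fun w => ip (phi (X w)) u])%E) ->
    exists (dZ : measure_display) (TZ : measurableType dZ) (Z : Om -> TZ),
      representation X Z /\
      condcov_is ip Z (fun u w => ip (phi (X w)) u) M.

End prob.

From HB Require Import structures.
From mathcomp Require Import all_boot all_order all_algebra.
From mathcomp Require Import all_classical all_reals all_analysis.
From mathcomp Require Import ring lra.

(* Let Sigma u v = Cov(<phi X, u>, <phi X, v>) be the covariance form of phi(X).  It is
   dominated by E<phi X, phi X> <u, u>, so for every direction b the Riesz representation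
   theorem turns v |-> Sigma v b * Sigma(., b) / Sigma b b into a rank-one operator M, and
   Cauchy-Schwarz gives 0 <= M <= Sigma.  Regularity then yields a representation Z with
   Var E[<phi X, v> | Z] = Sigma v b ^2 / Sigma b b for every v.  The three claims follow by
   choosing b in span {y, a}: for (i) the residual y - (Cov(Y,A) / Var A) a of y regressed
   on a, for (ii) b = y, and for (iii) b = - lam Cov(Y,A) a + (lam Var A - mu) y, where mu
   is the smaller root of mu^2 - (lam Var A - Var Y) mu = lam (Var A Var Y - Cov(Y,A)^2);
   this choice makes lam Sigma a b ^2 - Sigma y b ^2 = mu Sigma b b. *)

Set Implicit Arguments.
Unset Strict Implicit.
Unset Printing Implicit Defensive.

Import Order.TTheory GRing.Theory Num.Theory.
Local Open Scope classical_set_scope.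
Local Open Scope ring_scope.

Section linear_form.
Context {R : pzRingType} {V : lmodType R} (f : V -> R).
Hypothesis f_lin : forall (c : R) u v, f (c *: u + v) = c * f u + f v.

Lemma linear_form0 : f 0 = 0.
Proof.
have := f_lin 1 0 0; rewrite scaler0 addr0 mul1r => f00.
by apply: (@addrI _ (f 0)); rewrite addr0 -f00.
Qed.

Lemma linear_formD u v : f (u + v) = f u + f v.
Proof. by rewrite -[u]scale1r f_lin mul1r scale1r. Qed.

Lemma linear_formZ c u : f (c *: u) = c * f u.
Proof. by rewrite -[c *: u]addr0 f_lin linear_form0 addr0. Qed.

Lemma linear_formB u v : f (u - v) = f u - f v.
Proof. by rewrite addrC -scaleN1r f_lin mulN1r addrC. Qed.

End linear_form.

Lemma sqr_le_of_quadratic_ge0 {R : realFieldType} (a c d : R) :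
  0 <= a -> 0 <= d -> (forall r, 0 <= r ^+ 2 * a + 2 * r * c + d) ->
  c ^+ 2 <= a * d.
Proof.
move=> a_ge0 d_ge0 quad_ge0.
have [a0|a_neq0] := eqVneq a 0.
  have [->|c_neq0] := eqVneq c 0; first by rewrite expr0n a0 mul0r.
  have := quad_ge0 (- (d + 1) / (2 * c)).
  have -> : (- (d + 1) / (2 * c)) ^+ 2 * a + 2 * (- (d + 1) / (2 * c)) * c + d = -1.
    by rewrite a0; field.
  by rewrite ler0N1.
have a_gt0 : 0 < a by rewrite lt_def a_neq0.
have := quad_ge0 (- c / a).
have -> : (- c / a) ^+ 2 * a + 2 * (- c / a) * c + d = (a * d - c ^+ 2) / a.
  by field.
by rewrite pmulr_lge0 ?invr_gt0 // subr_ge0.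
Qed.

Section symmetric_form.
Context {R : realFieldType} {V : lmodType R} (b : V -> V -> R).
Hypothesis b_sym : forall u v, b u v = b v u.
Hypothesis b_linl : forall (c : R) u v w, b (c *: u + v) w = c * b u w + b v w.

Let b_lin w c u v : b (c *: u + v) w = c * b u w + b v w := b_linl c u v w.

Lemma bilinDl u v w : b (u + v) w = b u w + b v w.
Proof. exact: linear_formD (b_lin w) _ _. Qed.

Lemma bilinZl c u w : b (c *: u) w = c * b u w.
Proof. exact: linear_formZ (b_lin w) _ _. Qed.

Lemma bilinBl u v w : b (u - v) w = b u w - b v w.
Proof. exact: linear_formB (b_lin w) _ _. Qed.

Lemma bilinDr u v w : b w (u + v) = b w u + b w v.
Proof. by rewrite b_sym bilinDl !(b_sym w). Qed.

Lemma bilinZr c u w : b w (c *: u) = c * b w u.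
Proof. by rewrite b_sym bilinZl b_sym. Qed.

Lemma bilinBr u v w : b w (u - v) = b w u - b w v.
Proof. by rewrite b_sym bilinBl !(b_sym w). Qed.

Hypothesis b_ge0 : forall u, 0 <= b u u.

Lemma bilin_CauchySchwarz u v : b u v ^+ 2 <= b u u * b v v.
Proof.
apply: sqr_le_of_quadratic_ge0 => // r.
have := b_ge0 (r *: u + v).
rewrite bilinDl !bilinDr !bilinZl !bilinZr (b_sym v u).
by congr (_ <= _); ring.
Qed.

End symmetric_form.

Definition corr {R : rcfType} {V : lmodType R} (s : V -> V -> R) u v :=
  s u v / Num.sqrt (s u u * s v v).

(* For s b b = 0 this is 0 (x / 0 = 0), the value of the zero operator. *)
Definition rank_one_var {R : fieldType} {V : lmodType R} (s : V -> V -> R) b v :=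
  s v b ^+ 2 / s b b.

Lemma sqr_div_self {R : fieldType} (x : R) : x ^+ 2 / x = x.
Proof. by have [->|x_neq0] := eqVneq x 0; rewrite ?invr0 ?mulr0 // expr2 mulfK. Qed.

Lemma quadratic_smaller_root {R : rcfType} (p q : R) :
  0 <= p ^+ 2 + 4 * q ->
  let mu := 2^-1 * (p - Num.sqrt (p ^+ 2 + 4 * q)) in mu ^+ 2 - p * mu = q.
Proof.
move=> D_ge0 mu; have := sqr_sqrtr D_ge0; rewrite /mu.
move: (Num.sqrt _) => r r2; have -> : q = (r ^+ 2 - p ^+ 2) / 4 by rewrite r2; field.
by field.
Qed.

Section rank_one_directions.
Context {R : rcfType} {V : lmodType R} (s : V -> V -> R).
Hypotheses (s_sym : forall u v, s u v = s v u)
  (s_linl : forall (c : R) u v w, s (c *: u + v) w = c * s u w + s v w)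
  (s_ge0 : forall u, 0 <= s u u).
Variables (y a : V).
Hypotheses (s_yy_gt0 : 0 < s y y) (s_aa_gt0 : 0 < s a a).

Local Notation VY := (s y y).
Local Notation VA := (s a a).
Local Notation c := (s y a).

Let s_yy_neq0 : s y y != 0. Proof. by rewrite gt_eqF. Qed.
Let s_aa_neq0 : s a a != 0. Proof. by rewrite gt_eqF. Qed.

Let corr_sqr : corr s y a ^+ 2 = s y a ^+ 2 / (s y y * s a a).
Proof. by rewrite /corr expr_div_n sqr_sqrtr // mulr_ge0. Qed.

Let sZr := bilinZr s_sym s_linl.
Let sDr := bilinDr s_sym s_linl.

Lemma rank_one_var_self :
  rank_one_var s y y = s y y /\ rank_one_var s y a = s a a * corr s y a ^+ 2.
Proof.
rewrite /rank_one_var sqr_div_self corr_sqr (s_sym a y); split => //.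
by field; rewrite ?s_aa_neq0 ?s_yy_neq0.
Qed.

Lemma rank_one_var_residual :
  exists b, rank_one_var s b a = 0 /\ rank_one_var s b y = s y y * (1 - corr s y a ^+ 2).
Proof.
pose b := y - (s y a / s a a) *: a; exists b.
have s_ab : s a b = 0 by rewrite bilinBr // sZr (s_sym a y) mulfVK // subrr.
have s_yb : s y b = s y y - s y a ^+ 2 / s a a.
  by rewrite bilinBr // sZr; field.
have s_bb : s b b = s y b.
  by rewrite [in LHS]/b bilinBl // bilinZl // -/b (s_sym _ a) s_ab mulr0 subr0.
rewrite /rank_one_var s_ab expr2 !mul0r -s_bb sqr_div_self.
by rewrite s_bb s_yb corr_sqr; split => //; field; rewrite ?s_aa_neq0 ?s_yy_neq0.
Qed.

Lemma rank_one_var_root lam mu :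
  mu ^+ 2 - (lam * VA - VY) * mu = lam * (VA * VY - c ^+ 2) -> mu < lam * VA ->
  let b := (- (lam * c)) *: a + (lam * VA - mu) *: y in
  lam * rank_one_var s b a - rank_one_var s b y = mu.
Proof.
move=> mu_root mu_lt b.
have s_ab : s a b = - c * mu by rewrite /b sDr !sZr (s_sym a y); ring.
have s_yb : s y b = - mu * (lam * VA - mu) by rewrite /b sDr !sZr; nra.
have s_bb : s b b = - (lam * c) * s a b + (lam * VA - mu) * s y b.
  by rewrite [in LHS]/b bilinDl // !bilinZl.
rewrite /rank_one_var mulrA -mulrBl.
have [bb0|bb_neq0] := eqVneq (s b b) 0.
  have s_yb0 : s y b = 0.
    apply/eqP; rewrite -sqrf_eq0 eq_le sqr_ge0 andbT.
    by rewrite -(mulr0 (s y y)) -bb0 bilin_CauchySchwarz.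
  move: s_yb; rewrite bb0 invr0 mulr0 s_yb0 => /esym/eqP.
  by rewrite mulf_eq0 oppr_eq0 subr_eq0 (gt_eqF mu_lt) orbF => /eqP.
have -> : lam * s a b ^+ 2 - s y b ^+ 2 = mu * s b b.
  by rewrite s_bb s_ab s_yb; nra.
by rewrite mulfK.
Qed.

Lemma rank_one_var_tradeoff lam : 0 <= lam ->
  exists b, lam * rank_one_var s b a - rank_one_var s b y =
    2^-1 * (lam * VA - VY - Num.sqrt (VY ^+ 2 + lam ^+ 2 * VA ^+ 2
      - 2 * lam * VA * VY * (2 * corr s y a ^+ 2 - 1))).
Proof.
move=> lam_ge0; rewrite corr_sqr.
pose p := lam * VA - VY; pose q := lam * (VA * VY - c ^+ 2).
have q_ge0 : 0 <= q.
  by rewrite mulr_ge0 // subr_ge0 mulrC; apply: bilin_CauchySchwarz.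
have -> : VY ^+ 2 + lam ^+ 2 * VA ^+ 2 - 2 * lam * VA * VY * (2 * (c ^+ 2 / (VY * VA)) - 1)
    = p ^+ 2 + 4 * q.
  by rewrite /p /q; field; rewrite ?s_aa_neq0 ?s_yy_neq0.
have D_ge0 : 0 <= p ^+ 2 + 4 * q by rewrite addr_ge0 ?sqr_ge0 // mulr_ge0.
have := quadratic_smaller_root D_ge0; set mu := 2^-1 * _ => mu_root.
have mu_lt : mu < lam * VA.
  have : - p <= Num.sqrt (p ^+ 2 + 4 * q).
    by rewrite (le_trans (ler_norm _)) // normrN -sqrtr_sqr ler_wsqrtr // lerDl mulr_ge0.
  by have := s_yy_gt0; rewrite /mu /p; lra.
by eexists; apply: rank_one_var_root mu_root mu_lt.
Qed.

End rank_one_directions.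

Lemma normr_le_sqrtM {R : rcfType} (x p q : R) :
  0 <= p -> x ^+ 2 <= p * q -> `|x| <= Num.sqrt p * Num.sqrt q.
Proof. by move=> p_ge0 x2_le; rewrite -sqrtrM // -sqrtr_sqr ler_wsqrtr. Qed.

Lemma double_le_add_of_sqr_le {R : realFieldType} (x k l : R) :
  0 <= x -> 0 <= k -> l ^+ 2 <= k * x -> 2 * l <= x + k.
Proof. by move=> ? ? ?; have := sqr_ge0 (x - k); have := sqr_ge0 (x + k - 2 * l); nra. Qed.

Lemma invSn_lt_eventually {R : archiRealFieldType} (e : R) :
  0 < e -> exists N, forall n, (N <= n)%N -> n.+1%:R^-1 < e.
Proof. by move=> e_gt0; have [N _ ?] := near_infty_natSinv_lt (PosNum e_gt0); exists N. Qed.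

Section riesz.
Context {R : realType} {H : lmodType R} (ip : H -> H -> R).
Hypotheses (ip_inner : inner_product ip) (ip_cpl : ip_complete ip).
Variables (L : H -> R) (K : R).
Hypotheses (L_lin : forall (c : R) u v, L (c *: u + v) = c * L u + L v)
  (K_ge0 : 0 <= K) (L_bounded : forall u, L u ^+ 2 <= K * ip u u).

Let ip_sym : forall u v, ip u v = ip v u. Proof. by case: ip_inner. Qed.
Let ip_linl : forall (c : R) u v w, ip (c *: u + v) w = c * ip u w + ip v w.
Proof. by case: ip_inner. Qed.
Let ip_ge0 : forall u, 0 <= ip u u. Proof. by case: ip_inner. Qed.

Let ipnorm_lt u e : 0 < e -> ip u u < e ^+ 2 -> ipnorm ip u < e.
Proof. by move=> e_gt0; rewrite -ltr_sqrt ?exprn_gt0 // sqrtr_sqr gtr0_norm. Qed.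

(* L is represented by the minimizer of F: the infimum of F is attained because a minimizing
   sequence is Cauchy by the parallelogram law, and at a minimizer w the first variation
   F (r *: u + w) - F w = r ^+ 2 * ip u u + 2 * r * (ip u w - L u) is nonnegative. *)
Let F u := ip u u - 2 * L u.

Let F_ge u : - K <= F u.
Proof.
by have := double_le_add_of_sqr_le (ip_ge0 u) K_ge0 (L_bounded u); rewrite /F; lra.
Qed.

Let FDl d w : F (d + w) = F w + 2 * ip d w + ip d d - 2 * L d.
Proof.
rewrite /F (linear_formD L_lin) (bilinDl ip_linl) !(bilinDr ip_sym ip_linl).
by rewrite (ip_sym w d); ring.
Qed.

Let F_parallelogram u v :
  2 * (F u + F v) = 4 * F (2^-1 *: (u + v)) + ip (u - v) (u - v).
Proof.
rewrite /F !(bilinBl ip_linl, bilinBr ip_sym ip_linl, bilinZl ip_linl,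
  bilinZr ip_sym ip_linl, bilinDl ip_linl, bilinDr ip_sym ip_linl).
by rewrite (linear_formZ L_lin) (linear_formD L_lin) (ip_sym v u); field.
Qed.

Let F_continuous w u :
  F w <= F u + 2 * ipnorm ip (u - w) * (ipnorm ip w + Num.sqrt K).
Proof.
set d := u - w; have -> : u = d + w by rewrite subrK.
have := normr_le_sqrtM (ip_ge0 d) (bilin_CauchySchwarz ip_sym ip_linl ip_ge0 d w).
have := normr_le_sqrtM K_ge0 (L_bounded d).
rewrite FDl /ipnorm !ler_norml => /andP[? ?] /andP[? ?].
by have := ip_ge0 d; nra.
Qed.

Let minimizer_represents w : (forall u, F w <= F u) -> forall u, ip u w = L u.
Proof.
move=> w_min u; apply/eqP; rewrite -subr_eq0 -sqrf_eq0 eq_le sqr_ge0 andbT.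
rewrite -(mulr0 (ip u u)); apply: sqr_le_of_quadratic_ge0 => // r.
have := w_min (r *: u + w); rewrite FDl (linear_formZ L_lin) (bilinZl ip_linl).
by rewrite !(bilinZr ip_sym ip_linl) (bilinZl ip_linl); lra.
Qed.

Let minimizing_cauchy m (us : nat -> H) :
  (forall u, m <= F u) -> (forall n, F (us n) < m + n.+1%:R^-1) ->
  forall e, 0 < e -> exists N, forall n k, (N <= n)%N -> (N <= k)%N ->
    ipnorm ip (us n - us k) < e.
Proof.
move=> m_le us_min e e_gt0.
have [N N_small] := invSn_lt_eventually (divr_gt0 (exprn_gt0 2 e_gt0) (ltr0n _ 4)).
exists N => n k Nn Nk; apply: ipnorm_lt => //.
have := F_parallelogram (us n) (us k); have := m_le (2^-1 *: (us n + us k)).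
have := us_min n; have := us_min k; have := N_small n Nn; have := N_small k Nk.
move: (n.+1%:R^-1) (k.+1%:R^-1) => i j; lra.
Qed.

Let minimizing_limit m (us : nat -> H) w :
  (forall n, F (us n) < m + n.+1%:R^-1) ->
  (forall e, 0 < e -> exists N, forall n, (N <= n)%N -> ipnorm ip (us n - w) < e) ->
  F w <= m.
Proof.
move=> us_min us_cvg; apply/ler_addgt0Pr => e e_gt0.
have := F_continuous w; have : 0 <= ipnorm ip w + Num.sqrt K.
  by rewrite addr_ge0 ?sqrtr_ge0.
move: (ipnorm ip w + Num.sqrt K) => C C_ge0 Fw_le.
have C4_gt0 : 0 < 4 * (C + 1) by rewrite mulr_gt0 ?ltr_wpDl.
have [N1 N1_small] := invSn_lt_eventually (divr_gt0 e_gt0 (ltr0n _ 2)).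
have [N2 N2_close] := us_cvg _ (divr_gt0 e_gt0 C4_gt0).
pose n := maxn N1 N2.
have := N2_close n (leq_maxr _ _); rewrite ltr_pdivlMr //.
have := Fw_le (us n); have := us_min n; have := N1_small n (leq_maxl _ _).
have : 0 <= ipnorm ip (us n - w) := sqrtr_ge0 _.
move: (n.+1%:R^-1) (ipnorm ip (us n - w)) => i t; nra.
Qed.

Let F_has_minimizer : exists w, forall u, F w <= F u.
Proof.
have F_inf : has_inf (range F).
  by split; [exists (F 0), 0 | exists (- K) => _ [u _ <-]; apply: F_ge].
pose m := inf (range F).
have m_le u : m <= F u by apply: ge_inf; [case: F_inf | exists u].
have near_inf n : exists u, F u < m + n.+1%:R^-1.
  have inv_gt0 : 0 < n.+1%:R^-1 :> R by rewrite invr_gt0.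
  by have [_ [u _ <-] ?] := inf_adherent inv_gt0 F_inf; exists u.
have [us us_min] := choice near_inf.
have [w us_cvg] := ip_cpl (minimizing_cauchy m_le us_min).
by exists w => u; apply: le_trans (m_le u); apply: minimizing_limit us_cvg.
Qed.

Lemma riesz_representation : exists w, forall u, ip u w = L u.
Proof.
by have [w w_min] := F_has_minimizer; exists w; apply: minimizer_represents.
Qed.

End riesz.

Section rank_one.
Context {R : realType} {H : lmodType R} (ip : H -> H -> R) (s : H -> H -> R) (K : R).
Hypotheses (ip_hilbert : hilbert_space ip) (K_ge0 : 0 <= K).
Hypotheses (s_sym : forall u v, s u v = s v u)
  (s_linl : forall (c : R) u v w, s (c *: u + v) w = c * s u w + s v w)
  (s_ge0 : forall u, 0 <= s u u) (s_le : forall u, s u u <= K * ip u u).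

Lemma rank_one_operator b :
  exists M : {linear H -> H}, forall u v, ip u (M v) = s u b * s v b / s b b.
Proof.
case: ip_hilbert => ip_inner ip_cpl; have [ip_sym ip_linl _ _] := ip_inner.
have sb_bounded u : s u b ^+ 2 <= K * s b b * ip u u.
  apply: le_trans (bilin_CauchySchwarz s_sym s_linl s_ge0 u b) _.
  by rewrite mulrAC ler_wpM2r.
have [w w_repr] := riesz_representation ip_inner ip_cpl (fun c u v => s_linl c u v b)
  (mulr_ge0 K_ge0 (s_ge0 b)) sb_bounded.
pose f v := (s v b / s b b) *: w.
have f_lin : linear_for *:%R f.
  by move=> c u v; rewrite /f s_linl mulrDl scalerDl scalerA mulrA.
exists (HB.pack_for {linear H -> H} f (GRing.isLinear.Build R H H *:%R f f_lin)).
by move=> u v /=; rewrite /f (bilinZr ip_sym ip_linl) w_repr mulrC mulrA.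
Qed.

End rank_one.

Section covariance_form.
Context {R : realType} {H : lmodType R} (ip : H -> H -> R)
  {dX : measure_display} {TX : measurableType dX} (phi : TX -> H)
  {dO : measure_display} {Om : measurableType dO} (P : probability Om R)
  (X : Om -> TX).

Definition Phi u w := ip (phi (X w)) u.

Definition Sigma u v := fine (covariance P (Phi u) (Phi v)).

Hypothesis ip_inner : inner_product ip.
Hypothesis Phi_L2 : forall u, Phi u \in Lfun P 2%:E.

Let ip_sym : forall u v, ip u v = ip v u. Proof. by case: ip_inner. Qed.
Let ip_linl : forall (c : R) u v w, ip (c *: u + v) w = c * ip u w + ip v w.
Proof. by case: ip_inner. Qed.
Let ip_ge0 : forall u, 0 <= ip u u. Proof. by case: ip_inner. Qed.

Let P_fin : P setT \is a fin_num := fin_num_measure P _ measurableT.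
Let Phi_L1 u : Phi u \in Lfun P 1 := Lfun_subset12 P_fin (Phi_L2 u).
Let PhiM_L1 u v : Phi u * Phi v \in Lfun P 1 := Lfun2_mul_Lfun1 (Phi_L2 u) (Phi_L2 v).

Lemma covariance_Phi u v : covariance P (Phi u) (Phi v) = (Sigma u v)%:E.
Proof. by rewrite fineK // covariance_fin_num. Qed.

Lemma variance_Phi u : 'V_P[Phi u] = (Sigma u u)%:E.
Proof. exact: covariance_Phi. Qed.

Lemma Sigma_sym u v : Sigma u v = Sigma v u.
Proof. by rewrite /Sigma covarianceC. Qed.

Lemma Phi_linear c u v : Phi (c *: u + v) = c \o* Phi u \+ Phi v.
Proof.
by apply/funext => w; rewrite /Phi /= (bilinDr ip_sym ip_linl) (bilinZr ip_sym ip_linl) mulrC.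
Qed.

Lemma Sigma_linl c u v w : Sigma (c *: u + v) w = c * Sigma u w + Sigma v w.
Proof.
rewrite /Sigma Phi_linear covarianceDl ?Phi_L2 //; last first.
  by rewrite Lfun_scale // ?ler1n.
by rewrite covarianceZl // !covariance_Phi.
Qed.

Lemma Sigma_ge0 u : 0 <= Sigma u u.
Proof. exact/fine_ge0/variance_ge0. Qed.

Hypothesis phi_sqnorm_int :
  P.-integrable setT (fun w => (ip (phi (X w)) (phi (X w)))%:E).

Definition E_sqnorm := fine 'E_P[fun w => ip (phi (X w)) (phi (X w))].

Lemma E_sqnorm_ge0 : 0 <= E_sqnorm.
Proof. exact/fine_ge0/expectation_ge0. Qed.

Lemma Sigma_le u : Sigma u u <= E_sqnorm * ip u u.
Proof.
pose sqn w := ip (phi (X w)) (phi (X w)).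
have sqn_L1 : sqn \in Lfun P 1 by apply/Lfun1_integrable.
have Phi_meas v : measurable_fun setT (Phi v) := set_mem (sub_Lfun_mfun (Phi_L2 v)).
have sqn_meas : measurable_fun setT sqn := set_mem (sub_Lfun_mfun sqn_L1).
have E2_le : ('E_P[Phi u ^+ 2] <= 'E_P[ip u u \o* sqn])%E.
  apply: expectation_le.
  - exact: measurable_realfun.measurable_funM.
  - exact: measurable_realfun.measurable_funM.
  - by move=> x; exact: sqr_ge0.
  - by move=> x; apply: mulr_ge0; apply: ip_ge0.
  - apply: aeW => x /=; rewrite expr2 mulrC.
    exact: (bilin_CauchySchwarz ip_sym ip_linl ip_ge0 (phi (X x)) u).
have E2_fin := expectation_fin_num (PhiM_L1 u u).
rewrite expectationZl // -(fineK E2_fin) -(fineK (expectation_fin_num sqn_L1)) in E2_le.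
rewrite -EFinM lee_fin in E2_le.
rewrite /Sigma -[covariance _ _ _]/('V_P[Phi u]) varianceE // -(fineK E2_fin).
rewrite -(fineK (expectation_fin_num (Phi_L1 u))) -EFin_expe -EFinB /=.
by have := sqr_ge0 (fine 'E_P[Phi u]); rewrite /E_sqnorm -/sqn mulrC; lra.
Qed.

Hypothesis ip_cpl : ip_complete ip.

Lemma regular_rank_one b : regular P ip X phi ->
  exists (dZ : measure_display) (TZ : measurableType dZ) (Z : Om -> TZ),
    representation P X Z /\
    forall v, condvar_is P Z (Phi v) (rank_one_var Sigma b v).
Proof.
move=> reg.
have [M M_def] := rank_one_operator (conj ip_inner ip_cpl) E_sqnorm_ge0
  Sigma_sym Sigma_linl Sigma_ge0 Sigma_le b.
have M_sym u v : ip u (M v) = ip (M u) v.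
  by rewrite M_def ip_sym M_def [Sigma u b * _]mulrC.
have M_ge0 u : 0 <= ip u (M u).
  by rewrite M_def -expr2 mulr_ge0 ?sqr_ge0 ?invr_ge0 ?Sigma_ge0.
have M_le u : ((ip u (M u))%:E <= 'V_P[Phi u])%E.
  rewrite M_def variance_Phi lee_fin -expr2.
  have [->|bb_neq0] := eqVneq (Sigma b b) 0; first by rewrite invr0 mulr0 Sigma_ge0.
  rewrite ler_pdivrMr ?lt_def ?bb_neq0 ?Sigma_ge0 //.
  exact: (bilin_CauchySchwarz Sigma_sym Sigma_linl Sigma_ge0).
have [dZ [TZ [Z [Z_repr [h [h_condexp h_cov]]]]]] := reg M M_sym M_ge0 M_le.
exists dZ, TZ, Z; split => // v; exists (h v); split; first exact: h_condexp.
by rewrite /variance h_cov M_def /rank_one_var expr2.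
Qed.

End covariance_form.

Theorem theorem8 (R : realType) (H : lmodType R) (ip : H -> H -> R)
  (dX : measure_display) (TX : measurableType dX)
  (ev : H -> TX -> R) (phi : TX -> H)
  (dO : measure_display) (Om : measurableType dO) (P : probability Om R)
  (X : Om -> TX) (Y A : Om -> R) (y a : H) :
  RKHS ip ev phi ->
  measurable_fun setT X ->
  (forall u, measurable_fun setT (fun w => ip (phi (X w)) u)) ->
  (forall u, (fun w => ip (phi (X w)) u) \in Lfun P 2%:E) ->
  P.-integrable setT (fun w => (ip (phi (X w)) (phi (X w)))%:E) ->
  Y = (fun w => ip (phi (X w)) y) ->
  A = (fun w => ip (phi (X w)) a) ->
  y != 0 -> a != 0 ->
  (0 < 'V_P[Y])%E -> (0 < 'V_P[A])%E ->
  regular P ip X phi ->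
  let VY := fine 'V_P[Y] in
  let VA := fine 'V_P[A] in
  let rho := fine (covariance P Y A) / Num.sqrt (VY * VA) in
  [/\ (exists (dZ : measure_display) (TZ : measurableType dZ) (Z : Om -> TZ),
         [/\ representation P X Z, condvar_is P Z A 0
           & condvar_is P Z Y (VY * (1 - rho ^+ 2))]),
      (exists (dZ : measure_display) (TZ : measurableType dZ) (Z : Om -> TZ),
         [/\ representation P X Z, condvar_is P Z Y VY
           & condvar_is P Z A (VA * rho ^+ 2)])
    & (forall lam : R, 0 <= lam ->
         exists (dZ : measure_display) (TZ : measurableType dZ) (Z : Om -> TZ)
                (vA vY : R),
           [/\ representation P X Z, condvar_is P Z A vA, condvar_is P Z Y vY
             & lam * vA - vY =
               2^-1 * (lam * VA - VY
                 - Num.sqrt (VY ^+ 2 + lam ^+ 2 * VA ^+ 2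
                             - 2 * lam * VA * VY * (2 * rho ^+ 2 - 1)))])].
Proof.
case=> [[ip_inner ip_cpl] _ _ _] _ _ Phi_L2 sqnorm_int -> -> _ _ VY_gt0 VA_gt0 reg.
have Sigma_gt0 u : (0 < 'V_P[Phi ip phi X u])%E -> 0 < Sigma ip phi P X u u.
  by rewrite variance_Phi.
move/Sigma_gt0: VY_gt0 => VY_gt0; move/Sigma_gt0: VA_gt0 => VA_gt0.
have Z_of b := regular_rank_one ip_inner Phi_L2 sqnorm_int ip_cpl b reg.
have S_sym := Sigma_sym ip phi P X; have S_ge0 := Sigma_ge0 ip phi P X.
have S_linl := Sigma_linl ip_inner Phi_L2.
move=> VY VA rho; split.
- have [b [b_a b_y]] := rank_one_var_residual S_sym S_linl S_ge0 VY_gt0 VA_gt0.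
  have [dZ [TZ [Z [Z_repr Z_var]]]] := Z_of b.
  exists dZ, TZ, Z; split => //; first by move: (Z_var a); rewrite b_a.
  by move: (Z_var y); rewrite b_y.
- have [y_y y_a] := rank_one_var_self S_sym S_ge0 VY_gt0 VA_gt0.
  have [dZ [TZ [Z [Z_repr Z_var]]]] := Z_of y.
  exists dZ, TZ, Z; split => //; first by move: (Z_var y); rewrite y_y.
  by move: (Z_var a); rewrite y_a.
move=> lam lam_ge0.
have [b b_opt] := rank_one_var_tradeoff S_sym S_linl S_ge0 VY_gt0 VA_gt0 lam_ge0.
have [dZ [TZ [Z [Z_repr Z_var]]]] := Z_of b.
exists dZ, TZ, Z, (rank_one_var (Sigma ip phi P X) b a), (rank_one_var (Sigma ip phi P X) b y).
by split; [| exact: Z_var | exact: Z_var | exact: b_opt].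
Qed.
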